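(* Let $f_{1,\infty}=\{f_n\}$ be a sequence of continuous maps $f_n:[0,1]\to[0,1]$ converging uniformly to $f$, such that $\{f_n^k\}_{k\in\mathbb{N}}$ converges collectively to $\{f^k\}_{k\in\mathbb{N}}$ and $f_{1,\infty}$ is feebly open. Then the following are equivalent for $([0,1],f_{1,\infty})$: (1) it is strongly multi-sensitive; (2) it is $\mathcal{N}$-sensitive; (3) it is multi-sensitive; (4) it is sensitive.
   Context: Usual metric $d$ on $[0,1]$. Write $f_i^n=f_{n+i-1}\circ\cdots\circ f_i$, $f_i^0=\mathrm{id}$. Collective convergence: for every $\epsilon>0$ there is $N_0$ such that $\sup_x d(f_N^k(x),f^k(x))<\epsilon$ for all $N\ge N_0$ and all $k\in\mathbb{N}$. Feebly open: $\mathrm{int}(f_n(U))\ne\varnothing$ for every nonempty open $U$ and every $n$. $f_{1,\infty}^{[k]}=\{f^k_{k(n-1)+1}\}_{n=1}^\infty$ (its $n$-fold composition from index $1$ is $f_1^{kn}$). $N_{f_{1,\infty}}(V,\delta)=\{n\in\mathbb{N}:\exists u,v\in V,\ d(f_1^n(u),f_1^n(v))>\delta\}$. Sensitive: there is $\delta>0$ with $N_{f_{1,\infty}}(V,\delta)\ne\varnothing$ for all nonempty open $V$. Multi-sensitive: there is $\delta>0$ with $\bigcap_{i=1}^m N_{f_{1,\infty}}(V_i,\delta)\ne\varnothing$ for every finite collection of nonempty open $V_1,\dots,V_m$. For $\mathbf{v}=(v_1,\dots,v_r)\in\mathbb{N}^r$, multi-sensitive with respect to $\mathbf{v}$: there is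 $\delta>0$ such that $\bigcap_{i=1}^r N_{f_{1,\infty}^{[v_i]}}(U_i,\delta)\ne\varnothing$ for all nonempty open $U_1,\dots,U_r$; $\mathcal{N}$-sensitive: multi-sensitive with respect to $(1,\dots,n)$ for every $n$; strongly multi-sensitive: multi-sensitive with respect to every vector in $\mathbb{N}^r$, for every $r$. *)

From Stdlib Require Import Reals Lra Lia List.
Open Scope R_scope.

Definition I01 : Type := {x : R | 0 <= x <= 1}.
Definition dist (x y : I01) : R := Rabs (proj1_sig x - proj1_sig y).

Definition open_I (U : I01 -> Prop) : Prop :=
  forall x, U x -> exists eps, 0 < eps /\ forall y, dist x y < eps -> U y.
Definition nonempty_open (U : I01 -> Prop) : Prop :=
  open_I U /\ exists x, U x.

Definition continuous_I (g : I01 -> I01) : Prop :=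
  forall x eps, 0 < eps -> exists delta, 0 < delta /\
    forall y, dist x y < delta -> dist (g x) (g y) < eps.

(** A non-autonomous system f_{1,oo} = {f_n}_{n>=1}, encoded as f : nat -> I01 -> I01;
    the value f 0 is never used. *)

Fixpoint fcomp (f : nat -> I01 -> I01) (i n : nat) : I01 -> I01 :=
  match n with
  | O => fun x => x
  | S m => fun x => f (m + i)%nat (fcomp f i m x)
  end.

Definition uniform_conv (f : nat -> I01 -> I01) (g : I01 -> I01) : Prop :=
  forall eps, 0 < eps -> exists N0, forall n, (1 <= n)%nat -> (N0 <= n)%nat ->
    forall x, dist (f n x) (g x) < eps.

(** {f_N^k}_k converges collectively to {f^k}_k :
    sup_x d(f_N^k x, f^k x) < eps for all N >= N0 and all k. *)
Definition collective_conv (f : nat -> I01 -> I01) (g : I01 -> I01) : Prop :=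
  forall eps, 0 < eps -> exists N0, forall N, (1 <= N)%nat -> (N0 <= N)%nat ->
    forall k : nat, exists c, c < eps /\
      forall x, dist (fcomp f N k x) (Nat.iter k g x) <= c.

Definition feebly_open (f : nat -> I01 -> I01) : Prop :=
  forall n, (1 <= n)%nat -> forall U, nonempty_open U ->
    exists W, nonempty_open W /\ forall y, W y -> exists x, U x /\ f n x = y.

Definition blockseq (f : nat -> I01 -> I01) (k : nat) : nat -> I01 -> I01 :=
  fun n => fcomp f (k * (n - 1) + 1)%nat k.

Definition in_Nset (f : nat -> I01 -> I01) (V : I01 -> Prop) (delta : R) (n : nat) : Prop :=
  (1 <= n)%nat /\ exists u v, V u /\ V v /\ dist (fcomp f 1 n u) (fcomp f 1 n v) > delta.

Definition sensitive (f : nat -> I01 -> I01) : Prop :=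
  exists delta, 0 < delta /\ forall V, nonempty_open V -> exists n, in_Nset f V delta n.

Definition multi_sensitive (f : nat -> I01 -> I01) : Prop :=
  exists delta, 0 < delta /\ forall (m : nat) (V : nat -> I01 -> Prop),
    (forall i, (i < m)%nat -> nonempty_open (V i)) ->
    exists n, forall i, (i < m)%nat -> in_Nset f (V i) delta n.

Definition multi_sensitive_wrt (f : nat -> I01 -> I01) (v : list nat) : Prop :=
  exists delta, 0 < delta /\ forall U : nat -> I01 -> Prop,
    (forall i, (i < length v)%nat -> nonempty_open (U i)) ->
    exists n, (1 <= n)%nat /\ forall i, (i < length v)%nat ->
      in_Nset (blockseq f (nth i v 0%nat)) (U i) delta n.

Definition N_sensitive (f : nat -> I01 -> I01) : Prop :=
  forall n, (1 <= n)%nat -> multi_sensitive_wrt f (seq 1 n).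

Definition strongly_multi_sensitive (f : nat -> I01 -> I01) : Prop :=
  forall v : list nat, Forall (fun k => (1 <= k)%nat) v -> multi_sensitive_wrt f v.

(** Only sensitivity => cofinite sensitivity needs work: every other implication
   is immediate, and cofinite sensitivity (N(U, d) cofinite for every open U)
   gives all the multi-sensitivities at once.
   Let δ be a sensitivity constant and cut [0,1] into cells of width δ/8.  If
   two points of a ball have images under f_1^m at least δ/4 apart, the
   intermediate value theorem makes the image of the segment between them
   cover a whole cell.  Sensitivity near a preimage of its centre, read through
   collective convergence, shows that the cell contains two points whose
   g-orbits are δ/2 apart after k steps; since orbits that meet never separate,
   they stay some a > 0 apart before, with a uniform over the finitely many cells.
   Pulling these points back into the ball and using collective convergence
   again keeps the ball separated by a/2 up to time m+k, where the separation
   is δ/4 once more; iterating covers every later time. *)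

From Stdlib Require Import Reals Lra Lia List ZArith ProofIrrelevance Classical.
From Coquelicot Require Continuity.
(* Defs comes last so that [dist] is its metric on [0,1], not Stdlib's [Rtopology.dist]. *)
From Pilot Require Import Defs.
Open Scope R_scope.

Definition val (x : I01) : R := proj1_sig x.

Lemma val_bounds (x : I01) : 0 <= val x <= 1.
Proof. exact (proj2_sig x). Qed.

Lemma val_inj (x y : I01) : val x = val y -> x = y.
Proof.
  destruct x as [x hx], y as [y hy]; unfold val; simpl; intros ->.
  f_equal; apply proof_irrelevance.
Qed.

Lemma dist_val (x y : I01) : dist x y = Rabs (val x - val y).
Proof. reflexivity. Qed.

Lemma dist_sym (x y : I01) : dist x y = dist y x.
Proof. apply Rabs_minus_sym. Qed.

Lemma dist_refl (x : I01) : dist x x = 0.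
Proof. rewrite dist_val, Rminus_diag; apply Rabs_R0. Qed.

Lemma dist_triangle (x y z : I01) : dist x z <= dist x y + dist y z.
Proof.
  rewrite !dist_val.
  replace (val x - val z) with ((val x - val y) + (val y - val z)) by ring.
  apply Rabs_triang.
Qed.

Lemma dist_le0_eq (x y : I01) : dist x y <= 0 -> x = y.
Proof.
  rewrite dist_val; intros H; apply val_inj.
  apply Rminus_diag_uniq.
  destruct (Req_dec (val x - val y) 0) as [E | Hne]; [exact E |].
  pose proof (Rabs_pos_lt _ Hne); lra.
Qed.

Lemma dist_pairs_close (x1 x2 y1 y2 : I01) (e : R) :
  dist x1 y1 < e -> dist x2 y2 < e -> Rabs (dist x1 x2 - dist y1 y2) < 2 * e.
Proof.
  intros H1 H2.
  pose proof (dist_triangle x1 y1 x2); pose proof (dist_triangle y1 y2 x2).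
  pose proof (dist_triangle y1 x1 y2); pose proof (dist_triangle x1 x2 y2).
  pose proof (dist_sym y1 x1); pose proof (dist_sym y2 x2).
  apply Rabs_def1; lra.
Qed.

Lemma Rmax_minus_Rmin (x y : R) : Rmax x y - Rmin x y = Rabs (x - y).
Proof. unfold Rmax, Rmin, Rabs; destruct (Rle_dec x y); destruct Rcase_abs; lra. Qed.

Lemma fcomp_add (f : nat -> I01 -> I01) (i a b : nat) (x : I01) :
  fcomp f i (a + b) x = fcomp f (i + a) b (fcomp f i a x).
Proof.
  induction b as [|b IH]; [now rewrite Nat.add_0_r |].
  rewrite Nat.add_succ_r; simpl; rewrite IH; f_equal; lia.
Qed.

Lemma blockseq_fcomp (f : nat -> I01 -> I01) (k n : nat) (x : I01) :
  fcomp (blockseq f k) 1 n x = fcomp f 1 (k * n) x.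
Proof.
  induction n as [|n IH]; [now rewrite Nat.mul_0_r |].
  rewrite Nat.mul_succ_r, fcomp_add; cbn [fcomp]; rewrite IH; unfold blockseq.
  now replace (k * (n + 1 - 1) + 1)%nat with (1 + k * n)%nat by lia.
Qed.

Lemma common_pos_witness (W : nat -> R -> Prop) (M : nat) :
  (forall i b b', 0 < b' <= b -> W i b -> W i b') ->
  (forall i, (i < M)%nat -> exists b, 0 < b /\ W i b) ->
  exists a, 0 < a /\ forall i, (i < M)%nat -> W i a.
Proof.
  intros W_down; induction M as [|M IH]; intros HW.
  - exists 1; split; [lra | intros; lia].
  - destruct IH as [a [Ha HaW]]; [intros i Hi; apply HW; lia |].
    destruct (HW M (Nat.lt_succ_diag_r M)) as [b [Hb HbW]].
    pose proof (Rmin_pos a b Ha Hb); pose proof (Rmin_l a b); pose proof (Rmin_r a b).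
    exists (Rmin a b); split; [assumption |].
    intros i Hi; destruct (Nat.eq_dec i M) as [-> | Hne].
    + apply (W_down M b); [lra | exact HbW].
    + apply (W_down i a); [lra | apply HaW; lia].
Qed.

Lemma eventually_forall_lt (P : nat -> nat -> Prop) (L : nat) :
  (forall i, (i < L)%nat -> exists m, forall n, (m <= n)%nat -> P i n) ->
  exists m, forall i n, (i < L)%nat -> (m <= n)%nat -> P i n.
Proof.
  induction L as [|L IH]; intros HP.
  - exists 0%nat; intros; lia.
  - destruct IH as [m0 Hm0]; [intros i Hi; apply HP; lia |].
    destruct (HP L (Nat.lt_succ_diag_r L)) as [m1 Hm1].
    exists (Nat.max m0 m1); intros i n Hi Hn.
    destruct (Nat.eq_dec i L) as [-> | Hne]; [apply Hm1 | apply Hm0]; lia.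
Qed.

Lemma iter_dist_pos_before (g : I01 -> I01) (k : nat) (c1 c2 : I01) :
  0 < dist (Nat.iter k g c1) (Nat.iter k g c2) ->
  exists b, 0 < b /\ forall j, (j <= k)%nat -> b <= dist (Nat.iter j g c1) (Nat.iter j g c2).
Proof.
  intros Hk.
  destruct (common_pos_witness (fun j b => b <= dist (Nat.iter j g c1) (Nat.iter j g c2)) (S k))
    as [b [Hb Hall]].
  - intros j b b' Hb' Hj; lra.
  - intros j Hj; exists (dist (Nat.iter j g c1) (Nat.iter j g c2)); split; [| lra].
    destruct (Rle_lt_dec (dist (Nat.iter j g c1) (Nat.iter j g c2)) 0) as [H0 | H0]; [exfalso | exact H0].
    apply dist_le0_eq in H0.
    replace k with ((k - j) + j)%nat in Hk by lia.
    rewrite !Nat.iter_add, H0, dist_refl in Hk; lra.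
  - exists b; split; [exact Hb | intros j Hj; apply Hall; lia].
Qed.

Lemma fcomp_continuous (f : nat -> I01 -> I01) (i n : nat) :
  (forall n, (1 <= n)%nat -> continuous_I (f n)) -> (1 <= i)%nat -> continuous_I (fcomp f i n).
Proof.
  intros Hc Hi; induction n as [|n IH]; intros x eps Heps.
  - exists eps; split; auto.
  - destruct (Hc (n + i)%nat ltac:(lia) (fcomp f i n x) eps Heps) as [d1 [Hd1 H1]].
    destruct (IH x d1 Hd1) as [d2 [Hd2 H2]].
    exists d2; split; [exact Hd2 | intros y Hy; apply H1, H2, Hy].
Qed.

Lemma fcomp_continuous_upto (f : nat -> I01 -> I01) (m : nat) (w : I01) (eps : R) :
  (forall n, (1 <= n)%nat -> continuous_I (f n)) -> 0 < eps ->
  exists r, 0 < r /\ forall j z, (j <= m)%nat -> dist w z < r ->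
    dist (fcomp f 1 j w) (fcomp f 1 j z) < eps.
Proof.
  intros Hc Heps.
  destruct (common_pos_witness
              (fun j r => forall z, dist w z < r -> dist (fcomp f 1 j w) (fcomp f 1 j z) < eps) (S m))
    as [r [Hr Hall]].
  - intros j b b' Hb' Hj z Hz; apply Hj; lra.
  - intros j _; exact (fcomp_continuous f 1 j Hc (le_n 1) w eps Heps).
  - exists r; split; [exact Hr | intros j z Hj; apply Hall; lia].
Qed.

Definition ball (x : I01) (r : R) (y : I01) : Prop := dist x y < r.

Definition between (y a b : R) : Prop := Rmin a b <= y <= Rmax a b.

Lemma ball_nonempty_open (x : I01) (r : R) : 0 < r -> nonempty_open (ball x r).
Proof.
  intros Hr; split.
  - intros y Hy; exists (r - dist x y); split; [unfold ball in Hy; lra |].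
    intros z Hz; pose proof (dist_triangle x y z); unfold ball; lra.
  - exists x; unfold ball; rewrite dist_refl; exact Hr.
Qed.

Lemma ball_between (x : I01) (r : R) (u v w : I01) :
  ball x r u -> ball x r v -> between (val w) (val u) (val v) -> ball x r w.
Proof.
  unfold ball, between; rewrite !dist_val; intros Hu Hv [Hmin Hmax].
  apply Rabs_def2 in Hu; apply Rabs_def2 in Hv; apply Rabs_def1.
  - pose proof (Rmin_glb_lt (val u) (val v) (val x - r) ltac:(lra) ltac:(lra)); lra.
  - pose proof (Rmax_lub_lt (val u) (val v) (val x + r) ltac:(lra) ltac:(lra)); lra.
Qed.

Lemma clamp_bounds (x : R) : 0 <= Rmin 1 (Rmax 0 x) <= 1.
Proof.
  split; [apply Rmin_glb; [lra | apply Rmax_l] | apply Rmin_l].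
Qed.

Definition clamp (x : R) : I01 := exist _ (Rmin 1 (Rmax 0 x)) (clamp_bounds x).

Lemma val_clamp (x : R) : 0 <= x <= 1 -> val (clamp x) = x.
Proof.
  intros Hx; unfold clamp, val; simpl.
  rewrite Rmax_right, Rmin_right; lra.
Qed.

Lemma clamp_lipschitz (x y : R) : dist (clamp x) (clamp y) <= Rabs (x - y).
Proof.
  rewrite dist_val; unfold clamp, val; simpl.
  unfold Rmin, Rmax, Rabs.
  repeat match goal with
         | |- context [Rle_dec ?a ?b] => destruct (Rle_dec a b)
         | _ : context [Rle_dec ?a ?b] |- _ => destruct (Rle_dec a b)
         end;
    repeat destruct Rcase_abs; lra.
Qed.

Lemma ivt_I01 (hh : I01 -> I01) (u v : I01) (y : R) :
  continuous_I hh -> between y (val (hh u)) (val (hh v)) ->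
  exists w, between (val w) (val u) (val v) /\ val (hh w) = y.
Proof.
  intros Hc Hy.
  set (ext x := val (hh (clamp x))).
  assert (ext_cont : continuity ext).
  { intros x eps Heps.
    destruct (Hc (clamp x) eps Heps) as [d [Hd Hnear]].
    exists d; split; [exact Hd |]; intros z [_ Hz]; simpl in *; unfold R_dist in *.
    rewrite Rabs_minus_sym; apply Hnear.
    pose proof (clamp_lipschitz x z); rewrite Rabs_minus_sym in Hz; lra. }
  assert (ext_val : forall w : I01, ext (val w) = val (hh w)).
  { intros w; unfold ext; do 2 f_equal; apply val_inj, val_clamp, val_bounds. }
  destruct (Continuity.IVT_gen ext (val u) (val v) y ext_cont) as [x [Hx Hxy]].
  { rewrite !ext_val; exact Hy. }
  assert (Hx01 : 0 <= x <= 1).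
  { pose proof (val_bounds u); pose proof (val_bounds v).
    pose proof (Rmin_glb (val u) (val v) 0 ltac:(lra) ltac:(lra)).
    pose proof (Rmax_lub (val u) (val v) 1 ltac:(lra) ltac:(lra)); lra. }
  exists (clamp x); rewrite val_clamp by exact Hx01; split; [exact Hx | exact Hxy].
Qed.

Lemma ball_ivt (hh : I01 -> I01) (x : I01) (r : R) (u v : I01) (y : R) :
  continuous_I hh -> ball x r u -> ball x r v -> between y (val (hh u)) (val (hh v)) ->
  exists w, ball x r w /\ val (hh w) = y.
Proof.
  intros Hc Hu Hv Hy.
  destruct (ivt_I01 hh u v y Hc Hy) as [w [Hw Hwy]].
  exists w; split; [exact (ball_between x r u v w Hu Hv Hw) | exact Hwy].
Qed.

Lemma grid_cell_inside (h : R) : 0 < h -> exists M, forall p q, 0 <= p -> q <= 1 -> 2 * h <= q - p ->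
  exists i, (i < M)%nat /\ p <= INR i * h /\ (INR i + 1) * h <= q.
Proof.
  intros Hh; exists (Z.to_nat (up (1 / h))); intros p q Hp Hq Hpq.
  destruct (archimed (p / h)) as [Hz1 Hz2]; destruct (archimed (1 / h)) as [Hs1 _].
  assert (p / h * h = p) by (field; lra).
  assert (Hph : 0 <= p / h) by nra.
  assert (1 / h * h = 1) by (field; lra).
  set (z := up (p / h)) in *.
  assert (Hz0 : (0 < z)%Z) by (apply lt_IZR; simpl; lra).
  assert (Ez : INR (Z.to_nat z) = IZR z) by (rewrite INR_IZR_INZ, Z2Nat.id; [reflexivity | lia]).
  exists (Z.to_nat z); rewrite Ez.
  assert (p <= IZR z * h) by nra.
  assert ((IZR z + 1) * h <= q) by nra.
  assert (Hzs : (z < up (1 / h))%Z) by (apply lt_IZR; nra).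
  repeat split; [apply Z2Nat.inj_lt; lia | assumption | assumption].
Qed.

Definition cofinitely_sensitive (f : nat -> I01 -> I01) : Prop :=
  exists d, 0 < d /\ forall U, nonempty_open U ->
    exists m, forall n, (m <= n)%nat -> in_Nset f U d n.

Section CofiniteSensitivity.

Variables (f : nat -> I01 -> I01) (g : I01 -> I01) (del : R).
Hypothesis f_cont : forall n, (1 <= n)%nat -> continuous_I (f n).
Hypothesis del_pos : 0 < del.
Hypothesis f_sens : forall V, nonempty_open V -> exists n, in_Nset f V del n.

Lemma separated_after (w : I01) (m : nat) (r : R) : 0 < r ->
  exists n, (m < n)%nat /\ exists z1 z2, ball w r z1 /\ ball w r z2 /\
    del < dist (fcomp f 1 n z1) (fcomp f 1 n z2).
Proof.
  intros Hr.
  destruct (fcomp_continuous_upto f m w (del / 2) f_cont) as [r' [Hr' Hnear]]; [lra |].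
  destruct (f_sens (ball w (Rmin r r')) (ball_nonempty_open w _ (Rmin_pos _ _ Hr Hr')))
    as [n [_ [z1 [z2 [H1 [H2 Hn]]]]]].
  unfold ball in H1, H2; pose proof (Rmin_l r r'); pose proof (Rmin_r r r').
  exists n; split.
  - destruct (le_lt_dec n m) as [Hnm | Hnm]; [exfalso | exact Hnm].
    pose proof (Hnear n z1 Hnm ltac:(lra)); pose proof (Hnear n z2 Hnm ltac:(lra)).
    pose proof (dist_triangle (fcomp f 1 n z1) (fcomp f 1 n w) (fcomp f 1 n z2)).
    pose proof (dist_sym (fcomp f 1 n z1) (fcomp f 1 n w)); lra.
  - exists z1, z2; unfold ball; repeat split; lra.
Qed.

(* Width δ/8: an image gap of δ/4 contains a whole cell, and a collective
   error below δ/8 turns δ-separation of f-orbits into δ/2-separation of g-orbits. *)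
Definition cell (i : nat) (x : I01) : Prop :=
  INR i * (del / 8) < val x < (INR i + 1) * (del / 8).

Definition splitting_cell (i : nat) : Prop :=
  exists k, (1 <= k)%nat /\ exists c1 c2, cell i c1 /\ cell i c2 /\
    del / 2 < dist (Nat.iter k g c1) (Nat.iter k g c2).

Definition gap_witness (i : nat) (a : R) : Prop :=
  exists k, (1 <= k)%nat /\ exists c1 c2, cell i c1 /\ cell i c2 /\
    del / 2 < dist (Nat.iter k g c1) (Nat.iter k g c2) /\
    forall j, (j <= k)%nat -> a <= dist (Nat.iter j g c1) (Nat.iter j g c2).

Lemma splitting_cells_uniform_gap (M : nat) :
  exists a, 0 < a /\ forall i, (i < M)%nat -> splitting_cell i -> gap_witness i a.
Proof.
  apply common_pos_witness.
  - intros i b b' Hb' Hi Hsplit.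
    destruct (Hi Hsplit) as [k [Hk [c1 [c2 [H1 [H2 [Hd Hall]]]]]]].
    exists k; split; [exact Hk |]; exists c1, c2; do 3 (split; [assumption |]).
    intros j Hj; specialize (Hall j Hj); lra.
  - intros i _; destruct (classic (splitting_cell i)) as [[k [Hk [c1 [c2 [H1 [H2 Hd]]]]]] | Hnot].
    + destruct (iter_dist_pos_before g k c1 c2) as [b [Hb Hall]]; [lra |].
      exists b; split; [exact Hb |]; intros _.
      exists k; split; [exact Hk |]; exists c1, c2; do 3 (split; [assumption |]); exact Hall.
    + exists 1; split; [lra | intros H; contradiction].
Qed.

Variable M : nat.
Hypothesis grid_M : forall p q, 0 <= p -> q <= 1 -> 2 * (del / 8) <= q - p ->
  exists i, (i < M)%nat /\ p <= INR i * (del / 8) /\ (INR i + 1) * (del / 8) <= q.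
Variable a : R.
Hypothesis gap_a : forall i, (i < M)%nat -> splitting_cell i -> gap_witness i a.
Variables (e : R) (N0 : nat).
Hypothesis e_le_del : e <= del / 8.
Hypothesis e_le_a : e <= a / 4.
Hypothesis f_near_g : forall N k x, (N0 < N)%nat -> dist (fcomp f N k x) (Nat.iter k g x) < e.

Lemma fcomp_iter_dist_close (N k : nat) (x y : I01) : (N0 < N)%nat ->
  Rabs (dist (fcomp f N k x) (fcomp f N k y) - dist (Nat.iter k g x) (Nat.iter k g y)) < 2 * e.
Proof. intros HN; apply dist_pairs_close; apply f_near_g, HN. Qed.

Lemma cell_center_splits (m : nat) (w : I01) (i : nat) : (N0 <= m)%nat ->
  val (fcomp f 1 m w) = (INR i + / 2) * (del / 8) -> splitting_cell i.
Proof.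
  intros Hm Hw.
  destruct (fcomp_continuous f 1 m f_cont (le_n 1) w (del / 16)) as [r [Hr Hnear]]; [lra |].
  destruct (separated_after w m r Hr) as [n [Hmn [z1 [z2 [H1 [H2 Hd]]]]]].
  assert (Hcell : forall z, ball w r z -> cell i (fcomp f 1 m z)).
  { intros z Hz; specialize (Hnear z Hz); rewrite dist_val in Hnear.
    apply Rabs_def2 in Hnear; unfold cell; lra. }
  exists (n - m)%nat; split; [lia |].
  exists (fcomp f 1 m z1), (fcomp f 1 m z2); split; [now apply Hcell | split; [now apply Hcell |]].
  replace n with (m + (n - m))%nat in Hd by lia; rewrite !fcomp_add in Hd.
  pose proof (fcomp_iter_dist_close (1 + m) (n - m) (fcomp f 1 m z1) (fcomp f 1 m z2)
                ltac:(lia)) as Hclose.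
  apply Rabs_def2 in Hclose; lra.
Qed.

Lemma separation_step (m : nat) (x : I01) (r : R) (u v : I01) : (N0 <= m)%nat ->
  ball x r u -> ball x r v -> del / 4 <= dist (fcomp f 1 m u) (fcomp f 1 m v) ->
  exists k, (1 <= k)%nat /\
    (forall j, (j <= k)%nat -> exists w1 w2, ball x r w1 /\ ball x r w2 /\
       a / 2 <= dist (fcomp f 1 (m + j) w1) (fcomp f 1 (m + j) w2)) /\
    exists w1 w2, ball x r w1 /\ ball x r w2 /\
       del / 4 <= dist (fcomp f 1 (m + k) w1) (fcomp f 1 (m + k) w2).
Proof.
  intros Hm Hu Hv Huv.
  set (F := fcomp f 1 m) in *.
  assert (F_cont : continuous_I F) by exact (fcomp_continuous f 1 m f_cont (le_n 1)).
  destruct (grid_M (Rmin (val (F u)) (val (F v))) (Rmax (val (F u)) (val (F v)))) as [i [Hi [Hp Hq]]].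
  - pose proof (val_bounds (F u)); pose proof (val_bounds (F v)); apply Rmin_glb; lra.
  - pose proof (val_bounds (F u)); pose proof (val_bounds (F v)); apply Rmax_lub; lra.
  - rewrite Rmax_minus_Rmin, <- dist_val; lra.
  - assert (Hpre : forall y, INR i * (del / 8) <= y <= (INR i + 1) * (del / 8) ->
                     exists w, ball x r w /\ val (F w) = y).
    { intros y Hy; apply (ball_ivt F x r u v y F_cont Hu Hv); unfold between; lra. }
    destruct (Hpre ((INR i + / 2) * (del / 8))) as [w [_ Hw]]; [nra |].
    destruct (gap_a i Hi (cell_center_splits m w i Hm Hw))
      as [k [Hk [c1 [c2 [Hc1 [Hc2 [Hdk Hgap]]]]]]].
    destruct (Hpre (val c1)) as [w1 [Hw1 E1]]; [unfold cell in Hc1; lra |].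
    destruct (Hpre (val c2)) as [w2 [Hw2 E2]]; [unfold cell in Hc2; lra |].
    apply val_inj in E1; apply val_inj in E2.
    assert (Hshadow : forall j, Rabs (dist (fcomp f 1 (m + j) w1) (fcomp f 1 (m + j) w2)
                                     - dist (Nat.iter j g c1) (Nat.iter j g c2)) < 2 * e).
    { intros j; rewrite !fcomp_add; fold F; rewrite E1, E2.
      apply fcomp_iter_dist_close; lia. }
    exists k; split; [exact Hk | split].
    + intros j Hj; exists w1, w2; split; [exact Hw1 | split; [exact Hw2 |]].
      pose proof (Hgap j Hj); pose proof (Hshadow j) as Hs; apply Rabs_def2 in Hs; lra.
    + exists w1, w2; split; [exact Hw1 | split; [exact Hw2 |]].
      pose proof (Hshadow k) as Hs; apply Rabs_def2 in Hs; lra.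
Qed.

Lemma separation_persists (m : nat) (x : I01) (r : R) (u v : I01) : (N0 <= m)%nat ->
  ball x r u -> ball x r v -> del / 4 <= dist (fcomp f 1 m u) (fcomp f 1 m v) ->
  forall n, (m <= n)%nat -> exists w1 w2, ball x r w1 /\ ball x r w2 /\
    Rmin (del / 4) (a / 2) <= dist (fcomp f 1 n w1) (fcomp f 1 n w2).
Proof.
  intros Hm Hu Hv Huv n Hn.
  remember (n - m)%nat as t eqn:Ht; revert m u v Hm Hu Hv Huv Hn Ht.
  induction t as [t IH] using lt_wf_ind; intros m u v Hm Hu Hv Huv Hn Ht.
  destruct (separation_step m x r u v Hm Hu Hv Huv)
    as [k [Hk [Hbefore [w1 [w2 [Hw1 [Hw2 Hwk]]]]]]].
  destruct (le_lt_dec n (m + k)) as [Hnk | Hnk].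
  - destruct (Hbefore (n - m)%nat ltac:(lia)) as [z1 [z2 [Hz1 [Hz2 Hz]]]].
    replace (m + (n - m))%nat with n in Hz by lia.
    exists z1, z2; split; [exact Hz1 | split; [exact Hz2 |]].
    pose proof (Rmin_r (del / 4) (a / 2)); lra.
  - apply (IH (n - (m + k))%nat ltac:(lia) (m + k)%nat w1 w2); auto; lia.
Qed.

Lemma ball_eventually_separated (x : I01) (r : R) : 0 < r ->
  exists n0, forall n, (n0 <= n)%nat -> exists w1 w2, ball x r w1 /\ ball x r w2 /\
    Rmin (del / 4) (a / 2) <= dist (fcomp f 1 n w1) (fcomp f 1 n w2).
Proof.
  intros Hr.
  destruct (separated_after x N0 r Hr) as [n0 [Hn0 [u [v [Hu [Hv Huv]]]]]].
  exists n0; apply (separation_persists n0 x r u v); [lia | exact Hu | exact Hv | lra].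
Qed.

End CofiniteSensitivity.

Theorem sensitive_cofinitely_sensitive (f : nat -> I01 -> I01) (g : I01 -> I01) :
  (forall n, (1 <= n)%nat -> continuous_I (f n)) -> collective_conv f g ->
  sensitive f -> cofinitely_sensitive f.
Proof.
  intros Hc Hcoll [del [Hdel Hsens]].
  destruct (grid_cell_inside (del / 8)) as [M HM]; [lra |].
  destruct (splitting_cells_uniform_gap g del Hdel M) as [a [Ha Hgap]].
  set (e := Rmin (del / 8) (a / 4)).
  destruct (Hcoll e) as [N0 HN0]; [apply Rmin_pos; lra |].
  assert (f_near_g : forall N k x, (N0 < N)%nat -> dist (fcomp f N k x) (Nat.iter k g x) < e).
  { intros N k x HN; destruct (HN0 N ltac:(lia) ltac:(lia) k) as [c [Hc_e Hle]].
    specialize (Hle x); lra. }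
  pose proof (Rmin_pos (del / 4) (a / 2) ltac:(lra) ltac:(lra)).
  exists (Rmin (del / 4) (a / 2) / 2); split; [lra |].
  intros U [HU [x Hx]]; destruct (HU x Hx) as [r [Hr HrU]].
  destruct (ball_eventually_separated f g del Hc Hdel Hsens M HM a Hgap e N0
              (Rmin_l _ _) (Rmin_r _ _) f_near_g x r Hr) as [n0 Hn0].
  exists (S n0); intros n Hn.
  destruct (Hn0 n ltac:(lia)) as [w1 [w2 [Hw1 [Hw2 Hsep]]]].
  split; [lia |]; exists w1, w2; split; [now apply HrU | split; [now apply HrU | lra]].
Qed.

Lemma cofinitely_sensitive_strongly_multi_sensitive (f : nat -> I01 -> I01) :
  cofinitely_sensitive f -> strongly_multi_sensitive f.
Proof.
  intros [d [Hd Hcof]] v Hv; exists d; split; [exact Hd |]; intros U HU.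
  destruct (eventually_forall_lt (fun i n => in_Nset f (U i) d n) (length v)) as [n0 Hn0].
  { intros i Hi; exact (Hcof (U i) (HU i Hi)). }
  exists (S n0); split; [lia |]; intros i Hi.
  assert (Hvi : (1 <= nth i v 0)%nat) by (rewrite Forall_forall in Hv; apply Hv, nth_In, Hi).
  destruct (Hn0 i (nth i v 0 * S n0)%nat Hi ltac:(nia)) as [_ [u [w [Hu [Hw Hsep]]]]].
  split; [lia |]; exists u, w; rewrite !blockseq_fcomp; auto.
Qed.

Lemma cofinitely_sensitive_multi_sensitive (f : nat -> I01 -> I01) :
  cofinitely_sensitive f -> multi_sensitive f.
Proof.
  intros [d [Hd Hcof]]; exists d; split; [exact Hd |]; intros m V HV.
  destruct (eventually_forall_lt (fun i n => in_Nset f (V i) d n) m) as [n0 Hn0].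
  { intros i Hi; exact (Hcof (V i) (HV i Hi)). }
  exists n0; intros i Hi; apply Hn0; auto.
Qed.

Lemma strongly_multi_sensitive_N_sensitive (f : nat -> I01 -> I01) :
  strongly_multi_sensitive f -> N_sensitive f.
Proof.
  intros Hs n _; apply Hs; rewrite Forall_forall; intros k Hk; apply in_seq in Hk; lia.
Qed.

Lemma N_sensitive_sensitive (f : nat -> I01 -> I01) : N_sensitive f -> sensitive f.
Proof.
  intros HN; destruct (HN 1%nat (le_n 1)) as [d [Hd H]]; exists d; split; [exact Hd |].
  intros V HV; destruct (H (fun _ => V) (fun _ _ => HV)) as [n [_ Hn]].
  exists n; destruct (Hn 0%nat ltac:(simpl; lia)) as [Hn1 [u [w [Hu [Hw Hsep]]]]].
  cbn [nth seq] in Hsep; rewrite !blockseq_fcomp, Nat.mul_1_l in Hsep.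
  split; [exact Hn1 | exists u, w; auto].
Qed.

Lemma multi_sensitive_sensitive (f : nat -> I01 -> I01) : multi_sensitive f -> sensitive f.
Proof.
  intros [d [Hd H]]; exists d; split; [exact Hd |]; intros V HV.
  destruct (H 1%nat (fun _ => V) (fun _ _ => HV)) as [n Hn]; exists n; apply (Hn 0%nat); lia.
Qed.

Theorem mainTheorem8 (f : nat -> I01 -> I01) (g : I01 -> I01) :
  (forall n, (1 <= n)%nat -> continuous_I (f n)) ->
  uniform_conv f g ->
  collective_conv f g ->
  feebly_open f ->
  (strongly_multi_sensitive f <-> N_sensitive f) /\
  (N_sensitive f <-> multi_sensitive f) /\
  (multi_sensitive f <-> sensitive f).
Proof.
  intros Hc _ Hcoll _.
  pose proof (sensitive_cofinitely_sensitive f g Hc Hcoll).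
  pose proof (cofinitely_sensitive_strongly_multi_sensitive f).
  pose proof (cofinitely_sensitive_multi_sensitive f).
  pose proof (strongly_multi_sensitive_N_sensitive f).
  pose proof (N_sensitive_sensitive f).
  pose proof (multi_sensitive_sensitive f).
  tauto.
Qed.
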